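(* Let $(S,\mathfrak{n})$ be a complete Noetherian local ring, $I$ an ideal of $S$, and $x_1,\dots,x_r$ a minimal generating sequence of $I$ which is $\Gamma$-expandable for a standard set $\Gamma$ of monomials in $k[T_1,\dots,T_r]$. Then $T_1,\dots,T_r\in\Gamma$.
   Context: A standard set is a set of monomials closed under taking divisors. For $u=T_1^{a_1}\cdots T_r^{a_r}$, $u(x)=x_1^{a_1}\cdots x_r^{a_r}$. A lifting is a map $\sigma:S/I\to S$ with $\sigma(0)=0$ and $\pi\circ\sigma=\mathrm{id}_{S/I}$. The sequence $x_1,\dots,x_r$ is $\Gamma$-expandable if for every lifting $\sigma$, every $f\in S$ has a unique representation $f=\sum_{u\in\Gamma}f_uu(x)$ (convergent sum) with all $f_u\in\sigma(S/I)$. *)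

From mathcomp Require Import all_boot all_order all_algebra.
Set Implicit Arguments. Unset Strict Implicit. Unset Printing Implicit Defensive.
Import GRing.Theory.
Local Open Scope ring_scope.

Record is_ideal (S : comUnitRingType) (J : S -> Prop) : Prop := IsIdeal {
  ideal0 : J 0;
  idealD : forall a b, J a -> J b -> J (a + b);
  idealM : forall c a, J a -> J (c * a) }.

Definition generates (S : comUnitRingType) (J : S -> Prop) (n : nat) (g : 'I_n -> S) : Prop :=
  forall a, J a <-> exists c : 'I_n -> S, a = \sum_(i < n) c i * g i.

Definition noetherian (S : comUnitRingType) : Prop :=
  forall J : S -> Prop, is_ideal J -> exists n (g : 'I_n -> S), generates J g.

(* (S, m) is a local ring with maximal ideal m: m is a proper ideal and
   every element outside m is a unit (so m is the unique maximal ideal). *)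
Definition local_ring (S : comUnitRingType) (m : S -> Prop) : Prop :=
  [/\ is_ideal m, ~ m 1 & forall a, ~ m a -> a \is a GRing.unit].

Fixpoint ideal_pow (S : comUnitRingType) (m : S -> Prop) (k : nat) : S -> Prop :=
  match k with
  | 0 => fun _ => True
  | k'.+1 => fun a => exists N (b c : 'I_N -> S),
      [/\ forall i, m (b i), forall i, ideal_pow m k' (c i)
        & a = \sum_(i < N) b i * c i]
  end.

Definition madic_lim (S : comUnitRingType) (m : S -> Prop) (u : nat -> S) (l : S) : Prop :=
  forall k, exists N, forall p, (N <= p)%N -> ideal_pow m k (u p - l).

(* S is complete (and separated) in the m-adic topology *)
Definition complete (S : comUnitRingType) (m : S -> Prop) : Prop :=
  (forall a, (forall k, ideal_pow m k a) -> a = 0) /\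
  (forall u : nat -> S,
     (forall k, exists N, forall p q, (N <= p)%N -> (N <= q)%N ->
        ideal_pow m k (u p - u q)) ->
     exists l, madic_lim m u l).

Definition minimal_generating (S : comUnitRingType) (J : S -> Prop) (r : nat) (x : 'I_r -> S) : Prop :=
  generates J x /\ forall n (y : 'I_n -> S), generates J y -> (r <= n)%N.

(* monomials T_1^{a_1} ... T_r^{a_r} in r variables, as exponent tuples *)
Definition monomial (r : nat) := r.-tuple nat.

Definition mono_eval (S : comUnitRingType) (r : nat) (x : 'I_r -> S) (u : monomial r) : S :=
  \prod_(i < r) x i ^+ tnth u i.

Definition mono_var (r : nat) (i : 'I_r) : monomial r := [tuple (i == j : nat) | j < r].

Definition mono_divides (r : nat) (v u : monomial r) : Prop :=
  forall i, (tnth v i <= tnth u i)%N.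

Definition standard_set (r : nat) (G : monomial r -> Prop) : Prop :=
  forall u v, G u -> mono_divides v u -> G v.

(* unconditional m-adic convergence of sum_{u in G} a u to f *)
Definition has_sum (S : comUnitRingType) (m : S -> Prop) (r : nat)
    (G : monomial r -> Prop) (a : monomial r -> S) (f : S) : Prop :=
  forall k, exists F0 : seq (monomial r),
    (forall u, u \in F0 -> G u) /\
    forall F : seq (monomial r), uniq F -> (forall u, u \in F -> G u) ->
      {subset F0 <= F} -> ideal_pow m k (f - \sum_(u <- F) a u).

(* A lifting sigma : S/I -> S with sigma(0)=0, pi o sigma = id is encoded by
   sig := sigma o pi : S -> S, i.e. a map constant on cosets of I, with
   sig a = a mod I and sig 0 = 0. Its image is sigma(S/I). *)
Definition lifting (S : comUnitRingType) (I : S -> Prop) (sig : S -> S) : Prop :=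
  [/\ forall a b, I (a - b) -> sig a = sig b,
      forall a, I (sig a - a) & sig 0 = 0].

Definition expandable (S : comUnitRingType) (m I : S -> Prop) (r : nat)
    (x : 'I_r -> S) (G : monomial r -> Prop) : Prop :=
  forall sig : S -> S, lifting I sig ->
  forall f : S,
    (exists F : monomial r -> S,
       (forall u, G u -> exists a, F u = sig a) /\
       has_sum m G (fun u => F u * mono_eval x u) f) /\
    (forall F F' : monomial r -> S,
       (forall u, G u -> exists a, F u = sig a) ->
       has_sum m G (fun u => F u * mono_eval x u) f ->
       (forall u, G u -> exists a, F' u = sig a) ->
       has_sum m G (fun u => F' u * mono_eval x u) f ->
       forall u, G u -> F u = F' u).

From mathcomp Require Import all_boot all_order all_algebra ring.
From Stdlib Require Import ClassicalEpsilon FunctionalExtensionality PropExtensionality.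
Set Implicit Arguments. Unset Strict Implicit. Unset Printing Implicit Defensive.
Import GRing.Theory.
Local Open Scope ring_scope.

(* If T_i is not in Gamma then, Gamma being closed under divisors, no monomial
   of Gamma involves T_i.  Expand x_i over Gamma and attribute every
   non-constant term to the first variable of its monomial: this writes x_i as
   c + sum_(j != i) x_j g_j, where g_j is the n-adic limit of the partial sums
   attributed to x_j (it exists by completeness, since the generators lie in n)
   and c is the coefficient of the monomial 1, a value of the lifting.  Then c
   lies in I, so c = sigma(0) = 0, and x_i is a redundant generator of I,
   against minimality. *)

Section Ideals.

Variables (S : comUnitRingType) (J : S -> Prop).
Hypothesis idJ : is_ideal J.

Lemma idealB a b : J a -> J b -> J (a - b).
Proof. by move=> Ja Jb; rewrite -mulN1r; apply: (idealD idJ) => //; apply: (idealM idJ). Qed.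

Lemma idealMr c a : J a -> J (a * c).
Proof. by rewrite mulrC; apply: (idealM idJ). Qed.

Lemma ideal_sum (T : Type) (s : seq T) (P : pred T) (F : T -> S) :
  (forall t, P t -> J (F t)) -> J (\sum_(t <- s | P t) F t).
Proof. by apply: (big_ind J) => //; [apply: (ideal0 idJ) | apply: (idealD idJ)]. Qed.

End Ideals.

Section IdealPowers.

Variables (S : comUnitRingType) (m : S -> Prop).
Hypothesis idm : is_ideal m.

Lemma ideal_pow_is_ideal k : is_ideal (ideal_pow m k).
Proof.
case: k => [|k] //; split=> /=.
- by exists 0%N, (fun _ => 0), (fun _ => 0); split; [case | case | rewrite big_ord0].
- move=> _ _ [N1 [b1 [c1 [mb1 mc1 ->]]]] [N2 [b2 [c2 [mb2 mc2 ->]]]].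
  pose cat (f1 : 'I_N1 -> S) (f2 : 'I_N2 -> S) i :=
    match split i with inl j => f1 j | inr j => f2 j end.
  exists (N1 + N2)%N, (cat b1 b2), (cat c1 c2); split.
  + by move=> i; rewrite /cat; case: (split i).
  + by move=> i; rewrite /cat; case: (split i).
  + rewrite big_split_ord; congr (_ + _); apply: eq_bigr => i _.
    * by rewrite /cat (unsplitK (inl _ i)).
    * by rewrite /cat (unsplitK (inr _ i)).
- move=> c _ [N [b [c' [mb mc' ->]]]].
  exists N, (fun i => c * b i), c'; split=> // [i|]; first exact: (idealM idm).
  by rewrite mulr_sumr; apply: eq_bigr => i _; rewrite mulrA.
Qed.

Lemma ideal_pow1 a : ideal_pow m 1 a -> m a.
Proof. by move=> [N [b [c [mb _ ->]]]]; apply: (ideal_sum idm) => i _; apply: idealMr. Qed.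

Lemma ideal_powS k a : ideal_pow m k.+1 a -> ideal_pow m k a.
Proof.
move=> [N [b [c [_ mc ->]]]]; apply: (ideal_sum (ideal_pow_is_ideal k)) => i _.
exact: (idealM (ideal_pow_is_ideal k) _ (mc i)).
Qed.

Lemma ideal_pow_le k k' a : (k <= k')%N -> ideal_pow m k' a -> ideal_pow m k a.
Proof. by move=> /subnK <-; elim: (k' - k)%N => [|d IH] // /ideal_powS. Qed.

Lemma ideal_pow_exp y e : m y -> ideal_pow m e (y ^+ e).
Proof.
move=> my; elim: e => [|e IH] //=.
by exists 1%N, (fun _ => y), (fun _ => y ^+ e); rewrite big_ord1 exprS.
Qed.

Lemma madic_lim_unique (u : nat -> S) l1 l2 :
  (forall a, (forall k, ideal_pow m k a) -> a = 0) ->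
  madic_lim m u l1 -> madic_lim m u l2 -> l1 = l2.
Proof.
move=> sep u_l1 u_l2; apply/eqP; rewrite -subr_eq0; apply/eqP/sep => k.
have [N1 H1] := u_l1 k; have [N2 H2] := u_l2 k; pose p := maxn N1 N2.
have -> : l1 - l2 = (u p - l2) - (u p - l1) by ring.
by apply: (idealB (ideal_pow_is_ideal k)); [apply: H2 | apply: H1];
  rewrite ?leq_maxl ?leq_maxr.
Qed.

Lemma eq_madic_lim (u v : nat -> S) l :
  u =1 v -> madic_lim m u l -> madic_lim m v l.
Proof. by move=> uv u_l k; have [N H] := u_l k; exists N => p; rewrite -uv; apply: H. Qed.

Lemma madic_lim_cst c : madic_lim m (fun _ => c) c.
Proof. by move=> k; exists 0%N => p _; rewrite subrr; apply: ideal0 (ideal_pow_is_ideal k). Qed.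

Lemma madic_limD (u v : nat -> S) l1 l2 :
  madic_lim m u l1 -> madic_lim m v l2 ->
  madic_lim m (fun p => u p + v p) (l1 + l2).
Proof.
move=> u_l1 v_l2 k; have [N1 H1] := u_l1 k; have [N2 H2] := v_l2 k.
exists (maxn N1 N2) => p; rewrite geq_max => /andP[pN1 pN2].
have -> : u p + v p - (l1 + l2) = (u p - l1) + (v p - l2) by ring.
by apply: (idealD (ideal_pow_is_ideal k)); [apply: H1 | apply: H2].
Qed.

Lemma madic_limMl (u : nat -> S) l c :
  madic_lim m u l -> madic_lim m (fun p => c * u p) (c * l).
Proof.
move=> u_l k; have [N H] := u_l k; exists N => p pN.
by rewrite -mulrBr; apply: (idealM (ideal_pow_is_ideal k)); apply: H.
Qed.

Lemma madic_lim_sum (T : Type) (s : seq T) (u : T -> nat -> S) (l : T -> S) :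
  (forall t, madic_lim m (u t) (l t)) ->
  madic_lim m (fun p => \sum_(t <- s) u t p) (\sum_(t <- s) l t).
Proof.
move=> u_l; elim: s => [|t s IH].
  by rewrite big_nil; apply: eq_madic_lim (madic_lim_cst 0) => p; rewrite big_nil.
rewrite big_cons; apply: eq_madic_lim (madic_limD (u_l t) IH) => p.
by rewrite big_cons.
Qed.

End IdealPowers.

Section Monomials.

Variable r : nat.

Definition mono1 : monomial r := [tuple 0%N | _ < r].

Definition mono_div_var (u : monomial r) (k : 'I_r) : monomial r :=
  [tuple (tnth u j - (j == k))%N | j < r].

Lemma mono_eval1 (S : comUnitRingType) (x : 'I_r -> S) : mono_eval x mono1 = 1.
Proof. by rewrite /mono_eval big1 // => j _; rewrite tnth_mktuple expr0. Qed.

Lemma mono_eval_div_var (S : comUnitRingType) (x : 'I_r -> S) u k :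
  (0 < tnth u k)%N -> mono_eval x u = x k * mono_eval x (mono_div_var u k).
Proof.
move=> uk_gt0; rewrite /mono_eval (bigD1 k) //= (bigD1 k (P := predT)) //=.
rewrite tnth_mktuple eqxx mulrA -exprS subn1 prednK //; congr (_ * _).
by apply: eq_bigr => j /negbTE jk; rewrite tnth_mktuple jk subn0.
Qed.

Lemma mono_eval_pow (S : comUnitRingType) (m : S -> Prop) (x : 'I_r -> S) u k e :
  is_ideal m -> (forall j, m (x j)) -> (e <= tnth u k)%N ->
  ideal_pow m e (mono_eval x u).
Proof.
move=> idm mx e_le; rewrite /mono_eval (bigD1 k) //=.
apply: (idealMr (ideal_pow_is_ideal idm e)).
exact: ideal_pow_le e_le (ideal_pow_exp _ (mx k)).
Qed.

Lemma standard_set_var_free (G : monomial r -> Prop) i u :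
  standard_set G -> ~ G (mono_var i) -> G u -> tnth u i = 0%N.
Proof.
move=> stdG Gi Gu; apply/eqP; rewrite -leqn0 leqNgt; apply/negP => ui_gt0.
by apply: Gi (stdG u _ Gu _) => j; rewrite tnth_mktuple; case: eqP => // <-.
Qed.

Definition in_box (d : nat) (u : monomial r) : bool := [forall j, tnth u j <= d]%N.

Definition box (d : nat) : seq (monomial r) :=
  [seq map_tuple (@nat_of_ord d.+1) t | t <- enum {: r.-tuple 'I_d.+1}].

Lemma box_uniq d : uniq (box d).
Proof.
rewrite map_inj_uniq ?enum_uniq // => t t' tt'.
apply: eq_from_tnth => j; apply: val_inj.
by have := congr1 (fun u => tnth u j) tt'; rewrite /= !tnth_map.
Qed.

Lemma mem_box d u : (u \in box d) = in_box d u.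
Proof.
apply/mapP/forallP => [[t _ ->] j | u_le].
  by rewrite tnth_map -ltnS ltn_ord.
exists [tuple inord (tnth u j) | j < r]; first by rewrite mem_enum.
by apply: eq_from_tnth => j; rewrite tnth_map tnth_mktuple inordK // ltnS u_le.
Qed.

Lemma in_box_le d d' u : (d <= d')%N -> in_box d u -> in_box d' u.
Proof. by move=> dd' /forallP u_le; apply/forallP => j; apply: leq_trans (u_le j) dd'. Qed.

Definition memb (G : monomial r -> Prop) (u : monomial r) : bool :=
  excluded_middle_informative (G u).

Lemma membP G u : reflect (G u) (memb G u).
Proof. by rewrite /memb; case: excluded_middle_informative => Gu; constructor. Qed.

Definition box_of (G : monomial r -> Prop) (d : nat) := [seq u <- box d | memb G u].

Lemma box_of_uniq G d : uniq (box_of G d).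
Proof. by rewrite filter_uniq ?box_uniq. Qed.

Lemma mem_box_of G d u : (u \in box_of G d) = memb G u && in_box d u.
Proof. by rewrite mem_filter mem_box. Qed.

End Monomials.

Section BoxSums.

Variables (S : comUnitRingType) (m : S -> Prop) (r : nat) (G : monomial r -> Prop).
Hypothesis idm : is_ideal m.

Lemma box_of_sum_split (f : monomial r -> S) d d' : (d <= d')%N ->
  \sum_(u <- box_of G d') f u =
  \sum_(u <- box_of G d) f u + \sum_(u <- box_of G d' | ~~ in_box d u) f u.
Proof.
move=> dd'; rewrite (bigID (in_box d)) /=; congr (_ + _).
rewrite -big_filter; apply/perm_big/uniq_perm.
- by rewrite filter_uniq ?box_of_uniq.
- exact: box_of_uniq.
move=> u; rewrite mem_filter !mem_box_of.
by case u_d: (in_box d u); rewrite ?andbF // (in_box_le dd' u_d) andbT.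
Qed.

Lemma box_of_sum_cauchy (f : monomial r -> S) :
  (forall d u, G u -> ~~ in_box d u -> ideal_pow m d (f u)) ->
  forall k, exists N, forall p q, (N <= p)%N -> (N <= q)%N ->
    ideal_pow m k (\sum_(u <- box_of G p) f u - \sum_(u <- box_of G q) f u).
Proof.
move=> f_tail k; exists k.
have tail_small p q : (k <= q)%N -> (q <= p)%N ->
    ideal_pow m k (\sum_(u <- box_of G p) f u - \sum_(u <- box_of G q) f u).
  move=> kq qp; rewrite (box_of_sum_split _ qp) addrC addKr.
  apply: (ideal_pow_le idm kq); rewrite big_seq_cond.
  apply: (ideal_sum (ideal_pow_is_ideal idm q)) => u /andP[].
  by rewrite mem_box_of => /andP[/membP Gu _]; apply: f_tail.
move=> p q kp kq; case: (leqP q p) => [qp | /ltnW pq]; first exact: tail_small.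
by rewrite -opprB -mulN1r; apply: (idealM (ideal_pow_is_ideal idm k)); apply: tail_small.
Qed.

Lemma has_sum_box_of_lim (a : monomial r -> S) f :
  has_sum m G a f -> madic_lim m (fun p => \sum_(u <- box_of G p) a u) f.
Proof.
move=> a_f k; have [F0 [F0G F0_sum]] := a_f k.
exists (\max_(u <- F0) \max_(j < r) tnth u j) => p pN.
rewrite -opprB -mulN1r; apply: (idealM (ideal_pow_is_ideal idm k)); apply: F0_sum.
- exact: box_of_uniq.
- by move=> u; rewrite mem_box_of => /andP[/membP].
move=> u uF0; rewrite mem_box_of; apply/andP; split; first exact/membP/F0G.
apply/forallP => j; apply: leq_trans pN; apply: leq_trans (leq_bigmax j) _.
exact: leq_bigmax_seq.
Qed.

End BoxSums.

Section LeadingVariable.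

Variables (S : comUnitRingType) (r : nat) (F : monomial r -> S) (x : 'I_r -> S).

Definition lead_cofactor (j : 'I_r) (u : monomial r) : S :=
  if [pick k | 0 < tnth u k]%N == Some j
  then F u * mono_eval x (mono_div_var u j) else 0.

Definition const_term (u : monomial r) : S := if u == mono1 r then F u else 0.

Lemma term_decomp u :
  F u * mono_eval x u = const_term u + \sum_j x j * lead_cofactor j u.
Proof.
rewrite /lead_cofactor /const_term; case: pickP => [k uk_gt0 | u_eq0].
  have /negbTE -> : u != mono1 r.
    by apply: contraTneq uk_gt0 => ->; rewrite tnth_mktuple.
  rewrite add0r (bigD1 k) //= eqxx big1 ?addr0 => [|j jk].
    by rewrite (mono_eval_div_var _ uk_gt0) mulrCA.
  by rewrite [_ == _](_ : _ = false) ?mulr0 //; apply: contraNF jk => /eqP[->].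
have -> : u = mono1 r.
  by apply: eq_from_tnth => j; rewrite tnth_mktuple; apply/eqP; rewrite -leqn0 leqNgt u_eq0.
by rewrite eqxx mono_eval1 mulr1 big1 ?addr0 // => j _; rewrite mulr0.
Qed.

Lemma box_of_sum_const_term G d :
  \sum_(u <- box_of G d) const_term u = if memb G (mono1 r) then F (mono1 r) else 0.
Proof.
rewrite /const_term; case G1: (memb G (mono1 r)).
  have in1 : mono1 r \in box_of G d.
    by rewrite mem_box_of G1; apply/forallP => j; rewrite tnth_mktuple.
  rewrite (big_rem _ in1) eqxx big1_seq; first exact: addr0.
  move=> u /andP[_]; rewrite (mem_rem_uniq _ (box_of_uniq G d)).
  by move=> /andP[/negbTE ->].
rewrite big1_seq // => u /andP[_]; rewrite mem_box_of => /andP[Gu _].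
by case: eqP Gu => // ->; rewrite G1.
Qed.

Lemma lead_cofactor_pow (m : S -> Prop) j d u :
  is_ideal m -> (forall i, m (x i)) -> ~~ in_box d u ->
  ideal_pow m d (lead_cofactor j u).
Proof.
move=> idm mx /forallPn [k]; rewrite -ltnNge => uk_gt.
rewrite /lead_cofactor; case: eqP => _; last exact: ideal0 (ideal_pow_is_ideal idm d).
apply: (idealM (ideal_pow_is_ideal idm d)); apply: (mono_eval_pow (k := k)) => //.
rewrite tnth_mktuple; case: (k == j); last by rewrite subn0 ltnW.
by rewrite subn1 -ltnS (ltn_predK uk_gt).
Qed.

Lemma lead_cofactor_var_free j u : tnth u j = 0%N -> lead_cofactor j u = 0.
Proof.
rewrite /lead_cofactor; case: pickP => [k uk_gt0 uj0 | _ _] //.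
by case: eqP => // -[kj]; move: uk_gt0; rewrite kj uj0.
Qed.

End LeadingVariable.

Lemma expansion_without_var (S : comUnitRingType) (m : S -> Prop) (r : nat)
    (x : 'I_r -> S) (G : monomial r -> Prop) (F : monomial r -> S) f i :
  is_ideal m -> complete m -> (forall j, m (x j)) ->
  standard_set G -> ~ G (mono_var i) ->
  has_sum m G (fun u => F u * mono_eval x u) f ->
  exists c (g : 'I_r -> S),
    [/\ c = 0 \/ G (mono1 r) /\ c = F (mono1 r), g i = 0
      & f = c + \sum_j x j * g j].
Proof.
move=> idm [sep cauchy] mx stdG Gi F_f.
pose t j p := \sum_(u <- box_of G p) lead_cofactor F x j u.
have [g t_g] : exists g : 'I_r -> S, forall j, madic_lim m (t j) (g j).
  apply: (@fin_all_exists _ (fun _ => S) (fun j => madic_lim m (t j))) => j.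
  apply: cauchy; apply: box_of_sum_cauchy => // d u _.
  exact: lead_cofactor_pow.
pose c := if memb G (mono1 r) then F (mono1 r) else 0.
have partial_sums p :
    \sum_(u <- box_of G p) F u * mono_eval x u = c + \sum_j x j * t j p.
  rewrite (eq_bigr _ (fun u _ => term_decomp F x u)) big_split /=.
  rewrite box_of_sum_const_term exchange_big; congr (_ + _).
  by apply: eq_bigr => j _; rewrite mulr_sumr.
exists c, g; split.
- by rewrite /c; case: membP; [right | left].
- apply: (madic_lim_unique idm sep (t_g i)).
  apply: eq_madic_lim (madic_lim_cst idm 0) => p; symmetry.
  apply: big1_seq => u /andP[_]; rewrite mem_box_of => /andP[/membP Gu _].
  exact/lead_cofactor_var_free/(standard_set_var_free stdG Gi Gu).
- apply: (madic_lim_unique idm sep (has_sum_box_of_lim idm F_f)).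
  have lim_x_t :=
    madic_lim_sum idm (index_enum 'I_r) (fun j => madic_limMl idm (x j) (t_g j)).
  apply: eq_madic_lim (madic_limD idm (madic_lim_cst idm c) lim_x_t) => p.
  by rewrite partial_sums.
Qed.

Section Liftings.

Variables (S : comUnitRingType) (I : S -> Prop).
Hypothesis idI : is_ideal I.

Lemma lifting_exists : exists sig, lifting I sig.
Proof.
pose rep a := epsilon (inhabits (0 : S)) (fun b => I (b - a)).
have rep_coset a : I (rep a - a).
  apply: (epsilon_spec (inhabits 0) (fun b => I (b - a))).
  by exists a; rewrite subrr; apply: ideal0 idI.
have rep_eq a b : I (a - b) -> rep a = rep b.
  move=> Iab; congr epsilon; apply: functional_extensionality => c.
  apply: propositional_extensionality; split=> Ica.
  - have -> : c - b = (c - a) + (a - b) by ring.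
    exact: (idealD idI).
  - have -> : c - a = (c - b) - (a - b) by ring.
    exact: idealB.
pose sig a := if excluded_middle_informative (I a) then 0 else rep a.
have I_coset a b : I (a - b) -> I b -> I a.
  move=> Iab Ib; have -> : a = (a - b) + b by ring.
  exact: (idealD idI).
exists sig; split; rewrite /sig.
- move=> a b Iab; case: excluded_middle_informative => Ia;
    case: excluded_middle_informative => Ib //=.
  + by case: Ib; apply: I_coset Ia; rewrite -opprB -mulN1r; apply: (idealM idI).
  + by case: Ia; apply: I_coset Ib.
  + exact: rep_eq.
- move=> a; case: excluded_middle_informative => Ia //=.
  by rewrite sub0r -mulN1r; apply: (idealM idI).
- by case: excluded_middle_informative => // -[]; apply: ideal0 idI.
Qed.

Lemma lifting_ideal_eq0 sig a : lifting I sig -> I (sig a) -> sig a = 0.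
Proof.
move=> [sig_eq sig_coset sig0] Isig; rewrite -sig0; apply: sig_eq.
have -> : a - 0 = sig a - (sig a - a) by ring.
exact: idealB.
Qed.

End Liftings.

Lemma expandable_ideal_proper (S : comUnitRingType) (m I : S -> Prop) (r : nat)
    (x : 'I_r -> S) (G : monomial r -> Prop) :
  is_ideal m -> ~ m 1 -> is_ideal I -> expandable m I x G -> ~ I 1.
Proof.
move=> idm m1 idI expG I1; have [sig lift_sig] := lifting_exists idI.
have sig0 a : sig a = 0.
  apply: (lifting_ideal_eq0 idI lift_sig).
  by rewrite -[sig a]mulr1; apply: (idealM idI).
have [[F [F_sig F_1]] _] := expG sig lift_sig 1.
have [F0 [F0G F0_sum]] := F_1 1%N.
have sum0 : \sum_(u <- undup F0) F u * mono_eval x u = 0.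
  apply: big1_seq => u /andP[_]; rewrite mem_undup => /F0G /F_sig [a ->].
  by rewrite sig0 mul0r.
apply/m1/(ideal_pow1 idm); rewrite -[1]subr0 -sum0.
by apply: F0_sum => [|u|u]; rewrite ?undup_uniq ?mem_undup //; apply: F0G.
Qed.

Section Generators.

Variables (S : comUnitRingType) (I : S -> Prop) (r : nat) (x : 'I_r -> S).
Hypotheses (idI : is_ideal I) (gen_x : generates I x).

Lemma generates_mem j : I (x j).
Proof.
apply/gen_x; exists (fun k => (k == j)%:R).
by rewrite (bigD1 j) //= eqxx mul1r big1 ?addr0 // => k /negbTE ->; rewrite mul0r.
Qed.

Lemma generators_in_maximal (m : S -> Prop) : local_ring m -> ~ I 1 -> forall j, m (x j).
Proof.
move=> [_ _ unit_m] I1 j; apply: Classical_Prop.NNPP => /unit_m x_unit.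
by apply: I1; rewrite -(mulVr x_unit); apply: (idealM idI); apply: generates_mem.
Qed.

Lemma generates_drop i (g : 'I_r -> S) :
  x i = \sum_j x j * g j -> g i = 0 -> generates I (fun k : 'I_r.-1 => x (lift i k)).
Proof.
move=> xi_comb gi0 a; split=> [/gen_x [c ->] | [c ->]]; last first.
  by apply: (ideal_sum idI) => k _; apply: (idealM idI); apply: generates_mem.
exists (fun k => c (lift i k) + c i * g (lift i k)).
have -> : \sum_j c j * x j = \sum_j (c j + c i * g j) * x j - c i * x i.
  by rewrite xi_comb mulr_sumr -sumrB; apply: eq_bigr => j _; ring.
by rewrite (bigD1_ord i) //= gi0 mulr0 addr0 addrAC subrr add0r.
Qed.

End Generators.

Lemma minimal_generating_irredundant (S : comUnitRingType) (I : S -> Prop) (r : nat)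
    (x : 'I_r -> S) i (g : 'I_r -> S) :
  is_ideal I -> minimal_generating I x ->
  x i = \sum_j x j * g j -> g i = 0 -> False.
Proof.
move=> idI [gen_x min_x] xi_comb gi0.
have := min_x _ _ (generates_drop idI gen_x xi_comb gi0).
by rewrite -{1}(prednK (leq_ltn_trans (leq0n i) (ltn_ord i))) ltnn.
Qed.

Theorem proposition3p12 (S : comUnitRingType) (n I : S -> Prop) (r : nat)
    (x : 'I_r -> S) (Gamma : monomial r -> Prop) :
  noetherian S -> local_ring n -> complete n ->
  is_ideal I -> minimal_generating I x ->
  standard_set Gamma -> expandable n I x Gamma ->
  forall i : 'I_r, Gamma (mono_var i).
Proof.
move=> _ loc_n cpl_n idI min_x stdG expG i.
have [idn n1 _] := loc_n.
apply: Classical_Prop.NNPP => Gi.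
have I1 := expandable_ideal_proper idn n1 idI expG.
have x_n := generators_in_maximal idI min_x.1 loc_n I1.
have [sig lift_sig] := lifting_exists idI.
have [[F [F_sig F_xi]] _] := expG sig lift_sig (x i).
have [c [g [c_coef gi0 xi_eq]]] := expansion_without_var idn cpl_n x_n stdG Gi F_xi.
have [a c_sig] : exists a, c = sig a.
  by case: c_coef => [-> | [G1 ->]]; [exists 0; case: lift_sig | apply: F_sig].
have Ic : I c.
  have -> : c = x i - \sum_j x j * g j by rewrite xi_eq addrK.
  apply: (idealB idI); first exact: generates_mem min_x.1 i.
  by apply: (ideal_sum idI) => j _; apply: (idealMr idI); apply: generates_mem min_x.1 j.
have c0 : c = 0 by rewrite c_sig; apply: (lifting_ideal_eq0 idI lift_sig); rewrite -c_sig.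
apply: (minimal_generating_irredundant idI min_x _ gi0).
by rewrite {1}xi_eq c0 add0r.
Qed.
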